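(* Let $\mathcal K$ be a finitely complete 2-category with a good yoneda structure. Let $C$ be small, and let $i:M\to\mathcal PC$ and $f:C\to A$ with $M$ and $f$ admissible; let $p:y_C/i\to C$, $q:y_C/i\to M$ be the projections of the lax pullback of $y_C$ and $i$. Then the colimit of $f$ weighted by $i$ exists iff there is an admissible 1-cell $k:M\to A$ and a 2-cell $\phi:fp\Rightarrow kq$ exhibiting $k$ as a pointwise left extension of $fp$ along $q$. When this is the case, $k\cong\mathrm{col}(i,f)$.
   Context: For $f:A\to B$, $g:C\to B$ the lax pullback $f/g$ has projections $p:f/g\to A$, $q:f/g\to C$ and universal 2-cell $\lambda:fp\Rightarrow gq$. Given $f:A\to C$, $g:A\to B$, $h:B\to C$, a 2-cell $\phi:f\Rightarrow hg$ exhibits $h$ as a left extension of $f$ along $g$ if for every $k:B\to C$, $\kappa\mapsto(\kappa g)\cdot\phi$ is a bijection from 2-cells $h\Rightarrow k$ to 2-cells $f\Rightarrow kg$; it exhibits $g$ as a left lifting of $f$ along (through) $h$ if for every $k:A\to B$, $\kappa\mapsto(h\kappa)\cdot\phi$ is a bijection from 2-cells $g\Rightarrow k$ to 2-cells $f\Rightarrow hk$; the lifting is absolute if $\phi j$ exhibits $gj$ as a left lifting of $fj$ along $h$ for all $j:D\to A$. $\phi$ exhibits $h$ as a pointwise left extension of $f$ along $g$ if for every $c:X\to B$, with lax pullback $p:g/c\to A$, $q:g/c\to X$, $\lambda:gp\Rightarrow cq$, $(h\lambda)\cdot(\phi p)$ exhibits $hc$ as a left extension of $fp$ along $q$. A good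 yoneda structure: a class of admissible 1-cells with $fg$ admissible whenever $f$ is; $A$ admissible when $1_A$ is; for admissible $A$ an object $\mathcal PA$ and admissible $y_A:A\to\mathcal PA$; for $f:A\to B$ with $A$, $f$ admissible a 1-cell $B(f,1):B\to\mathcal PA$ and 2-cell $\chi^f:y_A\Rightarrow B(f,1)f$; such that (i) $\chi^f$ exhibits $f$ as an absolute left lifting of $y_A$ through $B(f,1)$; (ii) if $A$, $f:A\to B$ admissible and $\psi:y_A\Rightarrow gf$ exhibits $f$ as an absolute left lifting of $y_A$ along $g$, then $\psi$ exhibits $g$ as a pointwise left extension of $y_A$ along $f$. $C$ is small if $C$ and $\mathcal PC$ are admissible. A colimit of $f$ weighted by $i$ is an admissible $\mathrm{col}(i,f):M\to A$ with a 2-cell $\eta:i\Rightarrow A(f,1)\mathrm{col}(i,f)$ exhibiting $\mathrm{col}(i,f)$ as an absolute left lifting of $i$ through $A(f,1)$. *)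

Definition cast2 {H : Type} (C : H -> H -> Type) {f g f' g' : H}
  (e1 : f = f') (e2 : g = g') (x : C f g) : C f' g' :=
  match e1 in _ = f1 return C f1 g' with
  | eq_refl => match e2 in _ = g1 return C f g1 with eq_refl => x end
  end.
Arguments cast2 {H} C {f g f' g'} e1 e2 x.

(* A (strict) 2-category, presented via vertical composition and whiskering
   (sesquicategory + interchange law). [comp1 g f] is "g after f". *)
Record cat2 := Cat2 {
  ob : Type;
  hom : ob -> ob -> Type;
  cell : forall A B : ob, hom A B -> hom A B -> Type;
  id1 : forall A : ob, hom A A;
  comp1 : forall A B C : ob, hom B C -> hom A B -> hom A C;
  id2 : forall (A B : ob) (f : hom A B), cell A B f f;
  vcomp : forall (A B : ob) (f g h : hom A B),
      cell A B g h -> cell A B f g -> cell A B f h;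
  whiskl : forall (A B C : ob) (h : hom B C) (f g : hom A B),
      cell A B f g -> cell A C (comp1 _ _ _ h f) (comp1 _ _ _ h g);
  whiskr : forall (A B C : ob) (f g : hom B C) (k : hom A B),
      cell B C f g -> cell A C (comp1 _ _ _ f k) (comp1 _ _ _ g k);
  comp1_assoc : forall (A B C D : ob) (h : hom C D) (g : hom B C) (f : hom A B),
      comp1 _ _ _ h (comp1 _ _ _ g f) = comp1 _ _ _ (comp1 _ _ _ h g) f;
  comp1_idl : forall (A B : ob) (f : hom A B), comp1 _ _ _ (id1 B) f = f;
  comp1_idr : forall (A B : ob) (f : hom A B), comp1 _ _ _ f (id1 A) = f;
  vcomp_assoc : forall (A B : ob) (f g h k : hom A B) (c : cell _ _ h k)
      (b : cell _ _ g h) (a : cell _ _ f g),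
      vcomp _ _ _ _ _ c (vcomp _ _ _ _ _ b a) = vcomp _ _ _ _ _ (vcomp _ _ _ _ _ c b) a;
  vcomp_idl : forall (A B : ob) (f g : hom A B) (a : cell _ _ f g),
      vcomp _ _ _ _ _ (id2 _ _ g) a = a;
  vcomp_idr : forall (A B : ob) (f g : hom A B) (a : cell _ _ f g),
      vcomp _ _ _ _ _ a (id2 _ _ f) = a;
  whiskl_id2 : forall (A B C : ob) (h : hom B C) (f : hom A B),
      whiskl _ _ _ h _ _ (id2 _ _ f) = id2 _ _ (comp1 _ _ _ h f);
  whiskl_vcomp : forall (A B C : ob) (h : hom B C) (f g k : hom A B)
      (b : cell _ _ g k) (a : cell _ _ f g),
      whiskl _ _ _ h _ _ (vcomp _ _ _ _ _ b a)
      = vcomp _ _ _ _ _ (whiskl _ _ _ h _ _ b) (whiskl _ _ _ h _ _ a);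
  whiskr_id2 : forall (A B C : ob) (f : hom B C) (k : hom A B),
      whiskr _ _ _ _ _ k (id2 _ _ f) = id2 _ _ (comp1 _ _ _ f k);
  whiskr_vcomp : forall (A B C : ob) (f g h : hom B C) (k : hom A B)
      (b : cell _ _ g h) (a : cell _ _ f g),
      whiskr _ _ _ _ _ k (vcomp _ _ _ _ _ b a)
      = vcomp _ _ _ _ _ (whiskr _ _ _ _ _ k b) (whiskr _ _ _ _ _ k a);
  whiskl_id1 : forall (A B : ob) (f g : hom A B) (a : cell _ _ f g),
      cast2 (cell A B) (comp1_idl _ _ f) (comp1_idl _ _ g)
        (whiskl _ _ _ (id1 B) _ _ a) = a;
  whiskl_comp1 : forall (A B C D : ob) (h' : hom C D) (h : hom B C)
      (f g : hom A B) (a : cell _ _ f g),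
      whiskl _ _ _ (comp1 _ _ _ h' h) _ _ a
      = cast2 (cell A D) (comp1_assoc _ _ _ _ h' h f) (comp1_assoc _ _ _ _ h' h g)
          (whiskl _ _ _ h' _ _ (whiskl _ _ _ h _ _ a));
  whiskr_id1 : forall (A B : ob) (f g : hom A B) (a : cell _ _ f g),
      cast2 (cell A B) (comp1_idr _ _ f) (comp1_idr _ _ g)
        (whiskr _ _ _ _ _ (id1 A) a) = a;
  whiskr_comp1 : forall (A B C D : ob) (f g : hom C D) (k : hom B C)
      (k' : hom A B) (a : cell _ _ f g),
      whiskr _ _ _ _ _ k' (whiskr _ _ _ _ _ k a)
      = cast2 (cell A D) (comp1_assoc _ _ _ _ f k k') (comp1_assoc _ _ _ _ g k k')
          (whiskr _ _ _ _ _ (comp1 _ _ _ k k') a);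
  whisk_lr : forall (A B C D : ob) (h : hom C D) (f g : hom B C) (k : hom A B)
      (a : cell _ _ f g),
      whiskr _ _ _ _ _ k (whiskl _ _ _ h _ _ a)
      = cast2 (cell A D) (comp1_assoc _ _ _ _ h f k) (comp1_assoc _ _ _ _ h g k)
          (whiskl _ _ _ h _ _ (whiskr _ _ _ _ _ k a));
  interchange : forall (A B C : ob) (f f' : hom B C) (g g' : hom A B)
      (b : cell _ _ f f') (a : cell _ _ g g'),
      vcomp _ _ _ _ _ (whiskr _ _ _ _ _ g' b) (whiskl _ _ _ f _ _ a)
      = vcomp _ _ _ _ _ (whiskl _ _ _ f' _ _ a) (whiskr _ _ _ _ _ g b)
}.

Arguments hom {K} : rename.
Arguments cell {K A B} : rename.
Arguments id1 {K} : rename.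
Arguments comp1 {K A B C} : rename.
Arguments id2 {K A B} : rename.
Arguments vcomp {K A B f g h} : rename.
Arguments whiskl {K A B C} h {f g} : rename.
Arguments whiskr {K A B C f g} k : rename.
Arguments comp1_assoc {K A B C D} h g f : rename.

Notation "g ⊚ f" := (comp1 g f) (at level 40, left associativity).

Section TwoCatNotions.
Context {K : cat2}.

Definition bijective_map {X Y : Type} (F : X -> Y) : Prop :=
  (forall x x', F x = F x' -> x = x') /\ (forall y, exists x, F x = y).

Definition is_left_extension {A B C : ob K} (f : hom A C) (g : hom A B)
  (h : hom B C) (phi : cell f (h ⊚ g)) : Prop :=
  forall k : hom B C, bijective_map (fun kappa : cell h k => vcomp (whiskr g kappa) phi).

Definition is_left_lifting {A B C : ob K} (f : hom A C) (g : hom A B)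
  (h : hom B C) (phi : cell f (h ⊚ g)) : Prop :=
  forall k : hom A B, bijective_map (fun kappa : cell g k => vcomp (whiskl h kappa) phi).

Definition whiskr_assoc {A B C D : ob K} {f : hom A C} (h : hom B C) (g : hom A B)
  (phi : cell f (h ⊚ g)) (j : hom D A) : cell (f ⊚ j) (h ⊚ (g ⊚ j)) :=
  cast2 (@cell K D C) eq_refl (eq_sym (comp1_assoc h g j)) (whiskr j phi).

Definition is_abs_left_lifting {A B C : ob K} (f : hom A C) (g : hom A B)
  (h : hom B C) (phi : cell f (h ⊚ g)) : Prop :=
  forall (D : ob K) (j : hom D A),
    is_left_lifting (f ⊚ j) (g ⊚ j) h (whiskr_assoc h g phi j).

Definition lax_whisk {A B C P X : ob K} {f : hom A B} {g : hom C B}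
  {p : hom P A} {q : hom P C} (lam : cell (f ⊚ p) (g ⊚ q)) (t : hom X P)
  : cell (f ⊚ (p ⊚ t)) (g ⊚ (q ⊚ t)) :=
  cast2 (@cell K X B) (eq_sym (comp1_assoc f p t)) (eq_sym (comp1_assoc g q t))
    (whiskr t lam).

Definition is_lax_pullback {A B C P : ob K} (f : hom A B) (g : hom C B)
  (p : hom P A) (q : hom P C) (lam : cell (f ⊚ p) (g ⊚ q)) : Prop :=
  (forall (X : ob K) (u : hom X A) (v : hom X C) (al : cell (f ⊚ u) (g ⊚ v)),
     exists! t : hom X P,
       exists (e1 : p ⊚ t = u) (e2 : q ⊚ t = v),
         cast2 (@cell K X B) (f_equal (comp1 f) e1) (f_equal (comp1 g) e2)
           (lax_whisk lam t) = al)
  /\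
  (forall (X : ob K) (t t' : hom X P) (b1 : cell (p ⊚ t) (p ⊚ t'))
          (b2 : cell (q ⊚ t) (q ⊚ t')),
     vcomp (whiskl g b2) (lax_whisk lam t) = vcomp (lax_whisk lam t') (whiskl f b1) ->
     exists! s : cell t t', whiskl p s = b1 /\ whiskl q s = b2).

Definition is_terminal (T : ob K) : Prop :=
  forall X : ob K, (exists! t : hom X T, True) /\
                   (forall t t' : hom X T, exists! s : cell t t', True).

Definition pb_eq {A B C P X : ob K} {f : hom A B} {g : hom C B}
  {p : hom P A} {q : hom P C} (E : f ⊚ p = g ⊚ q) (t : hom X P)
  : f ⊚ (p ⊚ t) = g ⊚ (q ⊚ t) :=
  eq_trans (comp1_assoc f p t)
    (eq_trans (f_equal (fun z => z ⊚ t) E) (eq_sym (comp1_assoc g q t))).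

Definition is_pullback {A B C P : ob K} (f : hom A B) (g : hom C B)
  (p : hom P A) (q : hom P C) (E : f ⊚ p = g ⊚ q) : Prop :=
  (forall (X : ob K) (u : hom X A) (v : hom X C), f ⊚ u = g ⊚ v ->
     exists! t : hom X P, p ⊚ t = u /\ q ⊚ t = v)
  /\
  (forall (X : ob K) (t t' : hom X P) (b1 : cell (p ⊚ t) (p ⊚ t'))
          (b2 : cell (q ⊚ t) (q ⊚ t')),
     cast2 (@cell K X B) (pb_eq E t) (pb_eq E t') (whiskl f b1) = whiskl g b2 ->
     exists! s : cell t t', whiskl p s = b1 /\ whiskl q s = b2).

(* Finite completeness: terminal object, pullbacks and lax pullbacks (comma
   objects); these generate all finite weighted 2-limits. *)
Definition finitely_complete : Prop :=
  (exists T : ob K, is_terminal T)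
  /\ (forall (A B C : ob K) (f : hom A B) (g : hom C B),
        exists (P : ob K) (p : hom P A) (q : hom P C) (E : f ⊚ p = g ⊚ q),
          is_pullback f g p q E)
  /\ (forall (A B C : ob K) (f : hom A B) (g : hom C B),
        exists (P : ob K) (p : hom P A) (q : hom P C) (lam : cell (f ⊚ p) (g ⊚ q)),
          is_lax_pullback f g p q lam).

Definition pointwise_cell {A B C X P : ob K} {f : hom A C} {g : hom A B}
  {h : hom B C} (phi : cell f (h ⊚ g)) {c : hom X B} {p : hom P A} {q : hom P X}
  (lam : cell (g ⊚ p) (c ⊚ q)) : cell (f ⊚ p) ((h ⊚ c) ⊚ q) :=
  cast2 (@cell K P C) eq_refl (comp1_assoc h c q)
    (vcomp (whiskl h lam) (whiskr_assoc h g phi p)).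

Definition is_pointwise_left_extension {A B C : ob K} (f : hom A C) (g : hom A B)
  (h : hom B C) (phi : cell f (h ⊚ g)) : Prop :=
  forall (X : ob K) (c : hom X B) (P : ob K) (p : hom P A) (q : hom P X)
         (lam : cell (g ⊚ p) (c ⊚ q)),
    is_lax_pullback g c p q lam ->
    is_left_extension (f ⊚ p) q (h ⊚ c) (pointwise_cell phi lam).

Definition iso1 {A B : ob K} (k c : hom A B) : Prop :=
  exists (a : cell k c) (b : cell c k), vcomp b a = id2 k /\ vcomp a b = id2 c.

End TwoCatNotions.

(* A good yoneda structure on K.  PP, yon, homf1 (= B(f,1)) and chi are given
   as total operations; the axioms only constrain them on admissible data. *)
Record good_yoneda_structure (K : cat2) := GoodYoneda {
  admissible : forall A B : ob K, hom A B -> Prop;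
  PP : ob K -> ob K;
  yon : forall A : ob K, hom A (PP A);
  homf1 : forall (A B : ob K) (f : hom A B), hom B (PP A);
  chi : forall (A B : ob K) (f : hom A B), cell (yon A) (homf1 _ _ f ⊚ f);
  adm_ideal : forall (A B C : ob K) (f : hom B C) (g : hom A B),
      admissible _ _ f -> admissible _ _ (f ⊚ g);
  adm_yon : forall A : ob K, admissible _ _ (id1 A) -> admissible _ _ (yon A);
  yoneda_i : forall (A B : ob K) (f : hom A B),
      admissible _ _ (id1 A) -> admissible _ _ f ->
      is_abs_left_lifting (yon A) f (homf1 _ _ f) (chi _ _ f);
  yoneda_ii_good : forall (A B : ob K) (f : hom A B) (g : hom B (PP A))
      (psi : cell (yon A) (g ⊚ f)),
      admissible _ _ (id1 A) -> admissible _ _ f ->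
      is_abs_left_lifting (yon A) f g psi ->
      is_pointwise_left_extension (yon A) f g psi
}.

Arguments admissible {K} Y {A B} : rename.
Arguments PP {K} Y : rename.
Arguments yon {K} Y : rename.
Arguments homf1 {K} Y {A B} : rename.
Arguments chi {K} Y {A B} : rename.

Definition adm_ob {K : cat2} (Y : good_yoneda_structure K) (A : ob K) : Prop :=
  admissible Y (id1 A).

Definition small {K : cat2} (Y : good_yoneda_structure K) (C : ob K) : Prop :=
  adm_ob Y C /\ adm_ob Y (PP Y C).

Definition is_colimit {K : cat2} (Y : good_yoneda_structure K) {C A M : ob K}
  (i : hom M (PP Y C)) (f : hom C A) (c : hom M A)
  (eta : cell i (homf1 Y f ⊚ c)) : Prop :=
  admissible Y c /\ is_abs_left_lifting i c (homf1 Y f) eta.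

(* Write [y] for [y_C] and [h] for [A(f,1)].  Axiom (ii), applied to the
   trivial lifting of [y] through the identity, says that [y] is dense: every
   comma square [y/c] exhibits [c] as a left extension.  Pasting comma squares
   upgrades this, for [y/i], to [lam] being a pointwise left extension of [y p]
   along [q].  By axiom (i), 2-cells [f p => k q] correspond to 2-cells
   [y p => h k q], and by density these correspond to 2-cells [i => h k].
   Pasting [chi^f] and [lam] shows that along these bijections the left
   extension property of [phi] at a comma square [q/x] is the left lifting
   property of the corresponding [eta] at [x]; so [phi] is pointwise exactly
   when [eta] exhibits [k] as [col(i,f)], and uniqueness of left liftings gives
   [k ≅ col(i,f)]. *)

From Stdlib Require Import ProofIrrelevance.

Definition ceq {K : cat2} {A B : ob K} {f g f' g' : hom A B}
  (x : cell f g) (y : cell f' g') : Prop :=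
  exists (e1 : f = f') (e2 : g = g'), cast2 (@cell K A B) e1 e2 x = y.

Infix "≈" := ceq (at level 70).

Ltac reassoc := solve [repeat rewrite ?comp1_assoc; reflexivity].

Section CellEquality.
Context {K : cat2}.

Lemma ceq_refl {A B : ob K} {f g : hom A B} (x : cell f g) : x ≈ x.
Proof. now exists eq_refl, eq_refl. Qed.

Lemma ceq_sym {A B : ob K} {f g f' g' : hom A B} (x : cell f g) (y : cell f' g') :
  x ≈ y -> y ≈ x.
Proof. intros [e1 [e2 H]]. destruct e1, e2. simpl in H. subst. apply ceq_refl. Qed.

Lemma ceq_trans {A B : ob K} {f g f' g' f'' g'' : hom A B}
  (x : cell f g) (y : cell f' g') (z : cell f'' g'') : x ≈ y -> y ≈ z -> x ≈ z.
Proof.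
  intros [e1 [e2 H]] [e3 [e4 H']]. destruct e1, e2, e3, e4. simpl in *. subst.
  apply ceq_refl.
Qed.

Lemma cast2_ceq {A B : ob K} {f g f' g' : hom A B} (e1 : f = f') (e2 : g = g')
  (x : cell f g) : cast2 (@cell K A B) e1 e2 x ≈ x.
Proof. apply ceq_sym. now exists e1, e2. Qed.

Lemma ceq_eq {A B : ob K} {f g : hom A B} (x y : cell f g) : x ≈ y -> x = y.
Proof.
  intros [e1 [e2 H]].
  now rewrite (proof_irrelevance _ e1 eq_refl), (proof_irrelevance _ e2 eq_refl) in H.
Qed.

Lemma id2_ceq {A B : ob K} (f f' : hom A B) : f = f' -> id2 f ≈ id2 f'.
Proof. intros E. destruct E. apply ceq_refl. Qed.

Lemma vcomp_ceq {A B : ob K} {f g h f' g' h' : hom A B} (a : cell f g) (b : cell g h)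
  (a' : cell f' g') (b' : cell g' h') : a ≈ a' -> b ≈ b' -> vcomp b a ≈ vcomp b' a'.
Proof.
  intros [e1 [e2 Ha]] [e3 [e4 Hb]]. destruct e1, e2, e4. simpl in *.
  rewrite (proof_irrelevance _ e3 eq_refl) in Hb. simpl in Hb. subst. apply ceq_refl.
Qed.

Lemma whiskl_ceq {A B C : ob K} (h h' : hom B C) {f g f' g' : hom A B}
  (a : cell f g) (a' : cell f' g') : h = h' -> a ≈ a' -> whiskl h a ≈ whiskl h' a'.
Proof. intros E [e1 [e2 H]]. destruct E, e1, e2. simpl in H. subst. apply ceq_refl. Qed.

Lemma whiskr_ceq {A B C : ob K} (k k' : hom A B) {f g f' g' : hom B C}
  (a : cell f g) (a' : cell f' g') : k = k' -> a ≈ a' -> whiskr k a ≈ whiskr k' a'.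
Proof. intros E [e1 [e2 H]]. destruct E, e1, e2. simpl in H. subst. apply ceq_refl. Qed.

Lemma whiskl_comp1_ceq {A B C D : ob K} (h' : hom C D) (h : hom B C) {f g : hom A B}
  (a : cell f g) : whiskl (h' ⊚ h) a ≈ whiskl h' (whiskl h a).
Proof. rewrite whiskl_comp1. apply cast2_ceq. Qed.

Lemma whiskr_comp1_ceq {A B C D : ob K} {f g : hom C D} (k : hom B C) (k' : hom A B)
  (a : cell f g) : whiskr k' (whiskr k a) ≈ whiskr (k ⊚ k') a.
Proof. rewrite whiskr_comp1. apply cast2_ceq. Qed.

Lemma whisk_lr_ceq {A B C D : ob K} (h : hom C D) {f g : hom B C} (k : hom A B)
  (a : cell f g) : whiskr k (whiskl h a) ≈ whiskl h (whiskr k a).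
Proof. rewrite whisk_lr. apply cast2_ceq. Qed.

Lemma whiskl_id1_ceq {A B : ob K} {f g : hom A B} (a : cell f g) : whiskl (id1 B) a ≈ a.
Proof.
  pose proof (whiskl_id1 K A B f g a) as H.
  eapply ceq_trans; [apply ceq_sym, cast2_ceq|]. rewrite H. apply ceq_refl.
Qed.

Lemma whiskr_id1_ceq {A B : ob K} {f g : hom A B} (a : cell f g) : whiskr (id1 A) a ≈ a.
Proof.
  pose proof (whiskr_id1 K A B f g a) as H.
  eapply ceq_trans; [apply ceq_sym, cast2_ceq|]. rewrite H. apply ceq_refl.
Qed.

Lemma vcomp_ceq_id2r {A B : ob K} {f g h f' : hom A B} (a : cell f g) (b : cell g h) :
  a ≈ id2 f' -> vcomp b a ≈ b.
Proof.
  intros [e1 [e2 H]]. destruct e1. simpl in H. destruct e2. simpl in H. subst.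
  rewrite vcomp_idr. apply ceq_refl.
Qed.

Lemma vcomp_ceq_id2l {A B : ob K} {f g h h' : hom A B} (a : cell f g) (b : cell g h) :
  b ≈ id2 h' -> vcomp b a ≈ a.
Proof.
  intros [e1 [e2 H]]. destruct e2. simpl in H. destruct e1. simpl in H. subst.
  rewrite vcomp_idl. apply ceq_refl.
Qed.

Lemma whiskl_ceq_id2 {A B C : ob K} (h : hom B C) {f g f' : hom A B} (a : cell f g) :
  a ≈ id2 f' -> whiskl h a ≈ id2 (h ⊚ f').
Proof.
  intros [e1 [e2 H]]. destruct e1. simpl in H. destruct e2. simpl in H. subst.
  rewrite whiskl_id2. apply ceq_refl.
Qed.

Lemma whiskr_ceq_id2 {A B C : ob K} (k : hom A B) {f g f' : hom B C} (a : cell f g) :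
  a ≈ id2 f' -> whiskr k a ≈ id2 (f' ⊚ k).
Proof.
  intros [e1 [e2 H]]. destruct e1. simpl in H. destruct e2. simpl in H. subst.
  rewrite whiskr_id2. apply ceq_refl.
Qed.

Lemma whiskr_assoc_ceq {A B C D : ob K} {f : hom A C} (h : hom B C) (g : hom A B)
  (phi : cell f (h ⊚ g)) (j : hom D A) : whiskr_assoc h g phi j ≈ whiskr j phi.
Proof. apply cast2_ceq. Qed.

Lemma lax_whisk_ceq {A B C P X : ob K} {f : hom A B} {g : hom C B}
  {p : hom P A} {q : hom P C} (lam : cell (f ⊚ p) (g ⊚ q)) (t : hom X P) :
  lax_whisk lam t ≈ whiskr t lam.
Proof. apply cast2_ceq. Qed.

Lemma pointwise_cell_ceq {A B C X P : ob K} {f : hom A C} {g : hom A B}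
  {h : hom B C} (phi : cell f (h ⊚ g)) {c : hom X B} {p : hom P A} {q : hom P X}
  (lam : cell (g ⊚ p) (c ⊚ q)) :
  pointwise_cell phi lam ≈ vcomp (whiskl h lam) (whiskr_assoc h g phi p).
Proof. apply cast2_ceq. Qed.

Definition hvcomp {A B : ob K} {f g g' h : hom A B} (b : cell g' h) (a : cell f g)
  (e : g = g') : cell f h :=
  vcomp b (cast2 (@cell K A B) eq_refl e a).

Lemma hvcomp_ceq {A B : ob K} {f g g' h f2 g2 g2' h2 : hom A B}
  (b : cell g' h) (a : cell f g) (e : g = g')
  (b2 : cell g2' h2) (a2 : cell f2 g2) (e2 : g2 = g2') :
  a ≈ a2 -> b ≈ b2 -> hvcomp b a e ≈ hvcomp b2 a2 e2.
Proof. intros Ha Hb. destruct e, e2. now apply vcomp_ceq. Qed.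

Lemma hvcomp_vcomp_ceq {A B : ob K} {f g g' h f2 g2 h2 : hom A B}
  (b : cell g' h) (a : cell f g) (e : g = g') (b2 : cell g2 h2) (a2 : cell f2 g2) :
  a ≈ a2 -> b ≈ b2 -> hvcomp b a e ≈ vcomp b2 a2.
Proof. intros Ha Hb. destruct e. now apply vcomp_ceq. Qed.

Lemma hvcomp_assoc {A B : ob K} {f g g' h h' k : hom A B}
  (a : cell f g) (b : cell g' h) (c : cell h' k)
  (e1 : h = h') (e2 : g = g') (e3 : g = g') (e4 : h = h') :
  hvcomp c (hvcomp b a e2) e1 ≈ hvcomp (hvcomp c b e4) a e3.
Proof.
  destruct e2, e1.
  rewrite (proof_irrelevance _ e3 eq_refl), (proof_irrelevance _ e4 eq_refl).
  unfold hvcomp; simpl. rewrite vcomp_assoc. apply ceq_refl.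
Qed.

End CellEquality.

Lemma bijective_map_ext {X Y : Type} (F G : X -> Y) :
  (forall x, F x = G x) -> bijective_map F -> bijective_map G.
Proof.
  intros E [Fi Fs]. split.
  - intros x x' H. apply Fi. now rewrite !E.
  - intros y. destruct (Fs y) as [x Hx]. exists x. now rewrite <- E.
Qed.

Lemma bijective_map_comp {X Y Z : Type} (F : X -> Y) (G : Y -> Z) :
  bijective_map F -> bijective_map G -> bijective_map (fun x => G (F x)).
Proof.
  intros [Fi Fs] [Gi Gs]. split.
  - intros x x' E. now apply Fi, Gi.
  - intros z. destruct (Gs z) as [y Hy]. destruct (Fs y) as [x Hx].
    exists x. congruence.
Qed.

Lemma bijective_map_square_iff {X Y Z W : Type} (Phi : X -> Y) (H1 : X -> Z)
  (G : Y -> W) (H2 : Z -> W) :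
  (forall x, G (Phi x) = H2 (H1 x)) -> bijective_map G -> bijective_map H2 ->
  bijective_map H1 <-> bijective_map Phi.
Proof.
  intros E [Gi Gs] [Hi Hs]. split.
  - intros [H1i H1s]. split.
    + intros x x' Ex. apply H1i, Hi. rewrite <- !E. now rewrite Ex.
    + intros y. destruct (Hs (G y)) as [z Hz]. destruct (H1s z) as [x Hx].
      exists x. apply Gi. now rewrite E, Hx.
  - intros [Pi Ps]. split.
    + intros x x' Ex. apply Pi, Gi. rewrite !E. now rewrite Ex.
    + intros z. destruct (Gs (H2 z)) as [y Hy]. destruct (Ps y) as [x Hx].
      exists x. apply Hi. now rewrite <- E, Hx.
Qed.

Section TwoCells.
Context {K : cat2}.

Lemma bijective_map_ceq {A B A' B' : ob K} {a b a' b' : hom A B} {c d c' d' : hom A' B'}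
  (F1 : cell a b -> cell c d) (F2 : cell a' b' -> cell c' d') :
  a = a' -> b = b' -> c = c' -> d = d' ->
  (forall x x', x ≈ x' -> F1 x ≈ F2 x') -> bijective_map F1 -> bijective_map F2.
Proof.
  intros e1 e2 e3 e4 H. destruct e1, e2, e3, e4.
  apply bijective_map_ext. intros x. apply ceq_eq, H, ceq_refl.
Qed.

Lemma bijective_map_ceq_cod {X : Type} {A B : ob K} {c d c' d' : hom A B}
  (F1 : X -> cell c d) (F2 : X -> cell c' d') :
  c = c' -> d = d' -> (forall x, F1 x ≈ F2 x) -> bijective_map F1 -> bijective_map F2.
Proof.
  intros e1 e2 H. destruct e1, e2.
  apply bijective_map_ext. intros x. apply ceq_eq, H.
Qed.

Lemma abs_left_lifting_left_lifting {A B C : ob K} (f : hom A C) (g : hom A B)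
  (h : hom B C) (phi : cell f (h ⊚ g)) :
  is_abs_left_lifting f g h phi -> is_left_lifting f g h phi.
Proof.
  intros Habs k. specialize (Habs A (id1 A) (k ⊚ id1 A)).
  assert (Hid : bijective_map (fun kappa : cell g k => whiskr (id1 A) kappa)).
  { split.
    - intros x x' E. apply ceq_eq.
      eapply ceq_trans; [apply ceq_sym, whiskr_id1_ceq|]. rewrite E. apply whiskr_id1_ceq.
    - intros y. exists (cast2 (@cell K A B) (comp1_idr _ _ _ g) (comp1_idr _ _ _ k) y).
      apply ceq_eq. eapply ceq_trans; [apply whiskr_id1_ceq|]. apply cast2_ceq. }
  eapply bijective_map_ceq_cod; [| | | exact (bijective_map_comp _ _ Hid Habs)].
  - apply comp1_idr.
  - now rewrite comp1_idr.
  - intros kappa. apply vcomp_ceq.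
    + eapply ceq_trans; [apply whiskr_assoc_ceq|]. apply whiskr_id1_ceq.
    + apply whiskl_ceq; [reflexivity|]. apply whiskr_id1_ceq.
Qed.

Lemma left_lifting_unique {A B C : ob K} (f : hom A C) (g g' : hom A B)
  (h : hom B C) (phi : cell f (h ⊚ g)) (phi' : cell f (h ⊚ g')) :
  is_left_lifting f g h phi -> is_left_lifting f g' h phi' -> iso1 g g'.
Proof.
  intros H1 H2.
  destruct (proj2 (H1 g') phi') as [a Ha].
  destruct (proj2 (H2 g) phi) as [b Hb].
  exists a, b. split.
  - apply (proj1 (H1 g)). simpl.
    now rewrite whiskl_vcomp, <- vcomp_assoc, Ha, Hb, whiskl_id2, vcomp_idl.
  - apply (proj1 (H2 g')). simpl.
    now rewrite whiskl_vcomp, <- vcomp_assoc, Hb, Ha, whiskl_id2, vcomp_idl.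
Qed.

Lemma lax_pullback_factor {A B C P X : ob K} {f : hom A B} {g : hom C B}
  {p : hom P A} {q : hom P C} {lam : cell (f ⊚ p) (g ⊚ q)} :
  is_lax_pullback f g p q lam ->
  forall (u : hom X A) (v : hom X C) {a b : hom X B} (al : cell a b),
  a = f ⊚ u -> b = g ⊚ v ->
  exists t : hom X P, p ⊚ t = u /\ q ⊚ t = v /\ whiskr t lam ≈ al.
Proof.
  intros HL u v a b al Ea Eb.
  destruct (proj1 HL X u v (cast2 (@cell K X B) Ea Eb al)) as [t [[e1 [e2 Et]] _]].
  exists t. split; [exact e1|]. split; [exact e2|].
  eapply ceq_trans; [apply ceq_sym, lax_whisk_ceq|].
  eapply ceq_trans;
    [apply ceq_sym, (cast2_ceq (f_equal (comp1 f) e1) (f_equal (comp1 g) e2))|].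
  rewrite Et. apply cast2_ceq.
Qed.

Lemma lax_pullback_factor_unique {A B C P X : ob K} {f : hom A B} {g : hom C B}
  {p : hom P A} {q : hom P C} {lam : cell (f ⊚ p) (g ⊚ q)} (t t' : hom X P) :
  is_lax_pullback f g p q lam ->
  p ⊚ t = p ⊚ t' -> q ⊚ t = q ⊚ t' -> whiskr t lam ≈ whiskr t' lam -> t = t'.
Proof.
  intros HL Ep Eq Et.
  destruct (proj1 HL X (p ⊚ t') (q ⊚ t') (lax_whisk lam t')) as [t0 [_ Huniq]].
  transitivity t0; [symmetry|]; apply Huniq.
  - exists Ep, Eq. apply ceq_eq.
    eapply ceq_trans; [apply cast2_ceq|]. eapply ceq_trans; [apply lax_whisk_ceq|].
    eapply ceq_trans; [exact Et|]. apply ceq_sym, lax_whisk_ceq.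
  - now exists eq_refl, eq_refl.
Qed.

(* By interchange, [whiskr (u ⊚ t)] fixes every 2-cell [a t => b t]. *)
Lemma whiskr_retraction_bijective {P L Z : ob K} (t : hom P L) (u : hom L P)
  (theta : cell (id1 P) (u ⊚ t)) (a b : hom L Z) :
  t ⊚ u = id1 L ->
  whiskl (a ⊚ t) theta ≈ id2 (a ⊚ t) -> whiskl (b ⊚ t) theta ≈ id2 (b ⊚ t) ->
  bijective_map (fun be : cell a b => whiskr t be).
Proof.
  intros tu Ha Hb.
  assert (Hut : forall (a' b' : hom L Z) (be : cell a' b'), whiskr u (whiskr t be) ≈ be).
  { intros a' b' be. eapply ceq_trans; [apply whiskr_comp1_ceq|].
    eapply ceq_trans; [apply whiskr_ceq; [exact tu|apply ceq_refl]|].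
    apply whiskr_id1_ceq. }
  split.
  - intros be be' E. apply ceq_eq.
    eapply ceq_trans; [apply ceq_sym, Hut|]. rewrite E. apply Hut.
  - intros gam.
    assert (Ea : (a ⊚ t) ⊚ u = a) by now rewrite <- comp1_assoc, tu, comp1_idr.
    assert (Eb : (b ⊚ t) ⊚ u = b) by now rewrite <- comp1_assoc, tu, comp1_idr.
    exists (cast2 (@cell K L Z) Ea Eb (whiskr u gam)). apply ceq_eq.
    eapply ceq_trans; [apply whiskr_ceq; [reflexivity|apply cast2_ceq]|].
    eapply ceq_trans; [apply whiskr_comp1_ceq|].
    pose proof (interchange K P P Z _ _ (id1 P) (u ⊚ t) gam theta) as I.
    eapply ceq_trans; [apply ceq_sym, (vcomp_ceq_id2r _ _ Ha)|].
    rewrite I. eapply ceq_trans; [apply (vcomp_ceq_id2l _ _ Hb)|].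
    apply whiskr_id1_ceq.
Qed.

End TwoCells.

Section CommaPasting.
Context {K : cat2} {A B M X L P L2 : ob K} {f : hom A B} {i : hom M B} {x : hom X M}.
Context {p : hom L A} {q : hom L M} {lam : cell (f ⊚ p) (i ⊚ q)}.
Context {r : hom P L} {s : hom P X} {mu : cell (q ⊚ r) (x ⊚ s)}.
Context {p2 : hom L2 A} {q2 : hom L2 X} {lam2 : cell (f ⊚ p2) ((i ⊚ x) ⊚ q2)}.
Hypothesis HL : is_lax_pullback f i p q lam.
Hypothesis Hmu : is_lax_pullback q x r s mu.
Hypothesis HL2 : is_lax_pullback f (i ⊚ x) p2 q2 lam2.

Section Comparison.
Variables (t : hom P L2) (u1 : hom L2 L) (u : hom L2 P).
Hypotheses (tp : p2 ⊚ t = p ⊚ r) (tq : q2 ⊚ t = s)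
  (tlam : whiskr t lam2 ≈ pointwise_cell lam mu).
Hypotheses (u1p : p ⊚ u1 = p2) (u1q : q ⊚ u1 = x ⊚ q2) (u1lam : whiskr u1 lam ≈ lam2).
Hypotheses (ur : r ⊚ u = u1) (us : s ⊚ u = q2) (umu : whiskr u mu ≈ id2 (q ⊚ u1)).

Lemma comparison_retraction : t ⊚ u = id1 L2.
Proof.
  apply (lax_pullback_factor_unique _ _ HL2).
  - now rewrite comp1_assoc, tp, <- comp1_assoc, ur, u1p, comp1_idr.
  - now rewrite comp1_assoc, tq, us, comp1_idr.
  - eapply ceq_trans; [apply ceq_sym, whiskr_comp1_ceq|].
    eapply ceq_trans; [apply whiskr_ceq; [reflexivity|exact tlam]|].
    eapply ceq_trans; [apply whiskr_ceq; [reflexivity|apply pointwise_cell_ceq]|].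
    rewrite whiskr_vcomp.
    eapply ceq_trans; [eapply vcomp_ceq_id2l|].
    { eapply ceq_trans; [apply whisk_lr_ceq|]. apply whiskl_ceq_id2, umu. }
    eapply ceq_trans; [apply whiskr_ceq; [reflexivity|apply whiskr_assoc_ceq]|].
    eapply ceq_trans; [apply whiskr_comp1_ceq|].
    eapply ceq_trans; [apply whiskr_ceq; [exact ur|apply ceq_refl]|].
    eapply ceq_trans; [exact u1lam|]. apply ceq_sym, whiskr_id1_ceq.
Qed.

Lemma comparison_cell_r :
  exists rho : cell r (u1 ⊚ t), whiskl p rho ≈ id2 (p ⊚ r) /\ whiskl q rho ≈ mu.
Proof.
  assert (E1 : p ⊚ r = p ⊚ (u1 ⊚ t)) by now rewrite comp1_assoc, u1p, tp.
  assert (E2 : x ⊚ s = q ⊚ (u1 ⊚ t))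
    by now rewrite comp1_assoc, u1q, <- comp1_assoc, tq.
  set (b1 := cast2 (@cell K P A) eq_refl E1 (id2 (p ⊚ r))).
  set (b2 := cast2 (@cell K P M) eq_refl E2 mu).
  assert (cond : vcomp (whiskl i b2) (lax_whisk lam r)
                 = vcomp (lax_whisk lam (u1 ⊚ t)) (whiskl f b1)).
  { apply ceq_eq. apply ceq_trans with (pointwise_cell lam mu).
    - eapply ceq_trans; [|apply ceq_sym, pointwise_cell_ceq]. apply vcomp_ceq.
      + eapply ceq_trans; [apply lax_whisk_ceq|apply ceq_sym, whiskr_assoc_ceq].
      + apply whiskl_ceq; [reflexivity|apply cast2_ceq].
    - apply ceq_sym. eapply ceq_trans; [eapply vcomp_ceq_id2r|].
      { apply whiskl_ceq_id2, cast2_ceq. }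
      eapply ceq_trans; [apply lax_whisk_ceq|].
      eapply ceq_trans; [apply ceq_sym, whiskr_comp1_ceq|].
      eapply ceq_trans; [apply whiskr_ceq; [reflexivity|exact u1lam]|]. exact tlam. }
  destruct (proj2 HL P r (u1 ⊚ t) b1 b2 cond) as [rho [[Hp Hq] _]].
  exists rho. rewrite Hp, Hq. split; apply cast2_ceq.
Qed.

Lemma comparison_unit :
  exists theta : cell (id1 P) (u ⊚ t),
    whiskl (p ⊚ r) theta ≈ id2 (p ⊚ r) /\ whiskl s theta ≈ id2 s.
Proof.
  destruct comparison_cell_r as [rho [Hp Hq]].
  assert (E1 : u1 ⊚ t = r ⊚ (u ⊚ t)) by now rewrite comp1_assoc, ur.
  assert (E2 : s ⊚ id1 P = s ⊚ (u ⊚ t)) by now rewrite comp1_assoc, us, tq, comp1_idr.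
  set (b1 := cast2 (@cell K P L) (eq_sym (comp1_idr _ _ _ r)) E1 rho).
  set (b2 := cast2 (@cell K P X) eq_refl E2 (id2 (s ⊚ id1 P))).
  assert (cond : vcomp (whiskl x b2) (lax_whisk mu (id1 P))
                 = vcomp (lax_whisk mu (u ⊚ t)) (whiskl q b1)).
  { apply ceq_eq. apply ceq_trans with mu.
    - eapply ceq_trans; [eapply vcomp_ceq_id2l|].
      { apply whiskl_ceq_id2, cast2_ceq. }
      eapply ceq_trans; [apply lax_whisk_ceq|]. apply whiskr_id1_ceq.
    - apply ceq_sym. eapply ceq_trans; [eapply vcomp_ceq_id2l|].
      { eapply ceq_trans; [apply lax_whisk_ceq|].
        eapply ceq_trans; [apply ceq_sym, whiskr_comp1_ceq|].
        apply whiskr_ceq_id2, umu. }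
      eapply ceq_trans; [apply whiskl_ceq; [reflexivity|apply cast2_ceq]|]. exact Hq. }
  destruct (proj2 Hmu P (id1 P) (u ⊚ t) b1 b2 cond) as [theta [[Hr Hs] _]].
  exists theta. split.
  - eapply ceq_trans; [apply whiskl_comp1_ceq|].
    eapply ceq_trans; [apply whiskl_ceq; [reflexivity|]|].
    { rewrite Hr. apply cast2_ceq. }
    exact Hp.
  - rewrite Hs. eapply ceq_trans; [apply cast2_ceq|]. apply id2_ceq, comp1_idr.
Qed.

End Comparison.

(* The comparison map [t : P -> L2] from the pasted comma square to the comma
   square of [f] and [i x] has a section [u] with a unit [1 => u t], so
   precomposition with [t] preserves the left extension property. *)
Lemma comma_pasting_left_extension :
  is_left_extension (f ⊚ p2) q2 (i ⊚ x) lam2 ->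
  is_left_extension ((f ⊚ p) ⊚ r) s (i ⊚ x) (pointwise_cell lam mu).
Proof.
  intros Hext g.
  destruct (lax_pullback_factor HL2 (p ⊚ r) s (pointwise_cell lam mu)
              (eq_sym (comp1_assoc f p r)) eq_refl) as [t [tp [tq tlam]]].
  destruct (lax_pullback_factor HL p2 (x ⊚ q2) lam2
              eq_refl (eq_sym (comp1_assoc i x q2))) as [u1 [u1p [u1q u1lam]]].
  destruct (lax_pullback_factor Hmu u1 q2 (id2 (q ⊚ u1)) eq_refl u1q)
    as [u [ur [us umu]]].
  pose proof (comparison_retraction t u1 u tp tq tlam u1p u1lam ur us umu) as tu.
  destruct (comparison_unit t u1 u tp tq tlam u1p u1q u1lam ur us umu)
    as [theta [Hpr Hs]].
  assert (Htheta : forall (Z W : ob K) (a : hom L2 Z) (h : hom W Z) (w : hom P W),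
             a ⊚ t = h ⊚ w -> whiskl w theta ≈ id2 w ->
             whiskl (a ⊚ t) theta ≈ id2 (a ⊚ t)).
  { intros Z W a h w E Hw.
    eapply ceq_trans; [apply whiskl_ceq; [exact E|apply ceq_refl]|].
    eapply ceq_trans; [apply whiskl_comp1_ceq|].
    eapply ceq_trans; [apply whiskl_ceq_id2, Hw|]. now apply id2_ceq. }
  assert (Hf : whiskl ((f ⊚ p2) ⊚ t) theta ≈ id2 ((f ⊚ p2) ⊚ t))
    by (apply (Htheta _ _ _ f (p ⊚ r)); [now rewrite <- comp1_assoc, tp | exact Hpr]).
  assert (Hg : whiskl ((g ⊚ q2) ⊚ t) theta ≈ id2 ((g ⊚ q2) ⊚ t))
    by (apply (Htheta _ _ _ g s); [now rewrite <- comp1_assoc, tq | exact Hs]).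
  pose proof (bijective_map_comp _ _ (Hext g)
                (whiskr_retraction_bijective t u theta _ _ tu Hf Hg)) as H.
  eapply bijective_map_ceq_cod; [| | | exact H].
  - now rewrite <- comp1_assoc, tp, comp1_assoc.
  - now rewrite <- comp1_assoc, tq.
  - intros kappa. simpl. rewrite whiskr_vcomp. apply vcomp_ceq; [exact tlam|].
    eapply ceq_trans; [apply whiskr_comp1_ceq|]. apply whiskr_ceq; [exact tq|apply ceq_refl].
Qed.

End CommaPasting.

Section Density.
Context {K : cat2}.

Definition commas_are_left_extensions {A B : ob K} (f : hom A B) : Prop :=
  forall (X L : ob K) (c : hom X B) (p : hom L A) (q : hom L X)
         (lam : cell (f ⊚ p) (c ⊚ q)),
    is_lax_pullback f c p q lam -> is_left_extension (f ⊚ p) q c lam.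

Lemma lax_pullback_pointwise_left_extension (HK : finitely_complete (K := K))
  {A B M L : ob K} (f : hom A B) (i : hom M B) (p : hom L A) (q : hom L M)
  (lam : cell (f ⊚ p) (i ⊚ q)) :
  commas_are_left_extensions f -> is_lax_pullback f i p q lam ->
  is_pointwise_left_extension (f ⊚ p) q i lam.
Proof.
  intros Hf HL X x P r s mu Hmu.
  destruct HK as [_ [_ Hcomma]].
  destruct (Hcomma _ _ _ f (i ⊚ x)) as [L2 [p2 [q2 [lam2 HL2]]]].
  exact (comma_pasting_left_extension HL Hmu HL2 (Hf _ _ _ _ _ _ HL2)).
Qed.

Definition lunitor_inv {A B : ob K} (y : hom A B) : cell y (id1 B ⊚ y) :=
  cast2 (@cell K A B) eq_refl (eq_sym (comp1_idl _ _ _ y)) (id2 y).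

Lemma lunitor_inv_whiskr {A B D : ob K} (y : hom A B) (j : hom D A) :
  whiskr_assoc (id1 B) y (lunitor_inv y) j ≈ id2 (y ⊚ j).
Proof.
  eapply ceq_trans; [apply whiskr_assoc_ceq|]. apply whiskr_ceq_id2, cast2_ceq.
Qed.

Lemma id_abs_left_lifting {A B : ob K} (y : hom A B) :
  is_abs_left_lifting y y (id1 B) (lunitor_inv y).
Proof.
  intros D j k.
  apply (bijective_map_ceq_cod (fun kappa : cell (y ⊚ j) k => kappa));
    [reflexivity | symmetry; apply comp1_idl | |].
  - intros kappa. apply ceq_sym.
    eapply ceq_trans; [eapply vcomp_ceq_id2r; apply lunitor_inv_whiskr|]. apply whiskl_id1_ceq.
  - split; [now intros | intros z; now exists z].
Qed.

Lemma yon_commas_are_left_extensions (Y : good_yoneda_structure K) (C : ob K) :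
  adm_ob Y C -> commas_are_left_extensions (yon Y C).
Proof.
  intros HC X L c p q lam HL k.
  pose proof (yoneda_ii_good K Y C (PP Y C) (yon Y C) (id1 _) (lunitor_inv _) HC
                (adm_yon K Y C HC) (id_abs_left_lifting _) X c L p q lam HL k) as D.
  eapply bijective_map_ceq; [ | | | | | exact D];
    [apply comp1_idl | reflexivity | reflexivity | reflexivity |].
  intros kappa kappa' E. apply vcomp_ceq; [| apply whiskr_ceq; [reflexivity | exact E]].
  eapply ceq_trans; [apply pointwise_cell_ceq|].
  eapply ceq_trans; [eapply vcomp_ceq_id2r; apply lunitor_inv_whiskr|]. apply whiskl_id1_ceq.
Qed.

End Density.

Section WeightedColimits.
Context {K : cat2} (Y : good_yoneda_structure K) (HK : finitely_complete (K := K)).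
Context {C A M L : ob K} (i : hom M (PP Y C)) (f : hom C A).
Context (p : hom L C) (q : hom L M) (lam : cell (yon Y C ⊚ p) (i ⊚ q)).
Hypotheses (HC : adm_ob Y C) (Hf : admissible Y f)
  (HL : is_lax_pullback (yon Y C) i p q lam).

Local Notation h := (homf1 Y f).

Definition corresponding_cells {c : hom M A} (phi : cell (f ⊚ p) (c ⊚ q))
  (eta : cell i (h ⊚ c)) : Prop :=
  vcomp (whiskl h phi) (whiskr_assoc h f (chi Y f) p) = vcomp (whiskr_assoc h c eta q) lam.

Lemma pasting_extension_side {c : hom M A} (phi : cell (f ⊚ p) (c ⊚ q))
  (eta : cell i (h ⊚ c)) {X P : ob K} (x : hom X M) (r : hom P L) (s : hom P X)
  (mu : cell (q ⊚ r) (x ⊚ s)) (g : hom X A) (ka : cell (c ⊚ x) g) e1 e2 e3 :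
  corresponding_cells phi eta ->
  hvcomp (whiskl h (vcomp (whiskr s ka) (pointwise_cell phi mu)))
    (whiskr_assoc h f (chi Y f) (p ⊚ r)) (f_equal (comp1 h) (comp1_assoc f p r))
  ≈ hvcomp (whiskl h (whiskr s ka))
      (hvcomp (whiskl h (whiskl c mu)) (hvcomp (whiskr r (whiskr q eta)) (whiskr r lam) e1) e2) e3.
Proof.
  intros E.
  set (W1 := whiskl h (whiskr s ka)).
  set (W2 := whiskl h (whiskl c mu)).
  set (W3 := whiskl h (whiskr r phi)).
  set (X0 := whiskr r (whiskr p (chi Y f))).
  assert (HA : hvcomp (whiskl h (vcomp (whiskr s ka) (pointwise_cell phi mu)))
                 (whiskr_assoc h f (chi Y f) (p ⊚ r)) (f_equal (comp1 h) (comp1_assoc f p r))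
               ≈ hvcomp W1 (hvcomp W2 (hvcomp W3 X0 ltac:(reassoc)) ltac:(reassoc))
                   ltac:(reassoc)).
  { apply ceq_trans with
      (hvcomp (hvcomp W1 (hvcomp W2 W3 ltac:(reassoc)) ltac:(reassoc)) X0 ltac:(reassoc)).
    - apply hvcomp_ceq.
      + eapply ceq_trans; [apply whiskr_assoc_ceq|]. apply ceq_sym, whiskr_comp1_ceq.
      + rewrite whiskl_vcomp. apply ceq_sym, hvcomp_vcomp_ceq; [|apply ceq_refl].
        eapply ceq_trans; [|apply whiskl_ceq; [reflexivity|apply ceq_sym, pointwise_cell_ceq]].
        rewrite whiskl_vcomp. apply hvcomp_vcomp_ceq; [|apply ceq_refl].
        apply whiskl_ceq; [reflexivity|]. apply ceq_sym, whiskr_assoc_ceq.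
    - eapply ceq_trans; [apply ceq_sym, hvcomp_assoc|].
      apply hvcomp_ceq; [apply ceq_sym, hvcomp_assoc|apply ceq_refl]. }
  assert (HB : hvcomp W3 X0 ltac:(reassoc) ≈ whiskr r (vcomp (whiskr_assoc h c eta q) lam)).
  { rewrite <- E, whiskr_vcomp. apply hvcomp_vcomp_ceq.
    - apply whiskr_ceq; [reflexivity|]. apply ceq_sym, whiskr_assoc_ceq.
    - apply ceq_sym, whisk_lr_ceq. }
  eapply ceq_trans; [exact HA|].
  apply hvcomp_ceq; [|apply ceq_refl]. apply hvcomp_ceq; [|apply ceq_refl].
  eapply ceq_trans; [exact HB|]. rewrite whiskr_vcomp.
  apply ceq_sym, hvcomp_vcomp_ceq; [apply ceq_refl|].
  apply whiskr_ceq; [reflexivity|]. apply ceq_sym, whiskr_assoc_ceq.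
  Unshelve. all: reassoc.
Qed.

Lemma pasting_lifting_side {c : hom M A} (eta : cell i (h ⊚ c)) {X P : ob K} (x : hom X M)
  (r : hom P L) (s : hom P X) (mu : cell (q ⊚ r) (x ⊚ s)) (g : hom X A)
  (ka : cell (c ⊚ x) g) e1 e2 e3 :
  vcomp (whiskr s (vcomp (whiskl h ka) (whiskr_assoc h c eta x))) (pointwise_cell lam mu)
  ≈ hvcomp (whiskl h (whiskr s ka))
      (hvcomp (whiskl h (whiskl c mu)) (hvcomp (whiskr r (whiskr q eta)) (whiskr r lam) e1) e2) e3.
Proof.
  set (W1 := whiskl h (whiskr s ka)).
  set (W2 := whiskl h (whiskl c mu)).
  set (V1 := whiskr r (whiskr q eta)).
  set (V0 := whiskr r lam).
  set (U1 := whiskr s (whiskr x eta)).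
  set (U0 := whiskl i mu).
  assert (HF : vcomp (whiskr s (vcomp (whiskl h ka) (whiskr_assoc h c eta x)))
                 (pointwise_cell lam mu)
               ≈ hvcomp (hvcomp W1 U1 ltac:(reassoc)) (hvcomp U0 V0 ltac:(reassoc))
                   ltac:(reassoc)).
  { apply ceq_sym, hvcomp_vcomp_ceq.
    - eapply ceq_trans; [|apply ceq_sym, pointwise_cell_ceq].
      apply hvcomp_vcomp_ceq; [apply ceq_sym, whiskr_assoc_ceq|apply ceq_refl].
    - rewrite whiskr_vcomp. apply hvcomp_vcomp_ceq.
      + apply whiskr_ceq; [reflexivity|apply ceq_sym, whiskr_assoc_ceq].
      + apply ceq_sym, whisk_lr_ceq. }
  assert (HD : hvcomp U1 U0 ltac:(reassoc) ≈ hvcomp W2 V1 ltac:(reassoc)).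
  { apply ceq_trans with (vcomp (whiskl (h ⊚ c) mu) (whiskr (q ⊚ r) eta)).
    - rewrite <- interchange. apply hvcomp_vcomp_ceq; [apply ceq_refl|].
      apply whiskr_comp1_ceq.
    - apply ceq_sym, hvcomp_vcomp_ceq; [apply whiskr_comp1_ceq | apply ceq_sym, whiskl_comp1_ceq]. }
  eapply ceq_trans; [exact HF|].
  eapply ceq_trans; [apply ceq_sym, hvcomp_assoc|].
  apply hvcomp_ceq; [|apply ceq_refl].
  eapply ceq_trans; [apply hvcomp_assoc|].
  eapply ceq_trans; [eapply hvcomp_ceq; [apply ceq_refl|exact HD]|].
  apply ceq_sym, hvcomp_assoc.
  Unshelve. all: reassoc.
Qed.

Lemma corresponding_extension_cell {c : hom M A} (eta : cell i (h ⊚ c)) :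
  exists phi : cell (f ⊚ p) (c ⊚ q), corresponding_cells phi eta.
Proof.
  destruct (proj2 (yoneda_i K Y C A f HC Hf L p (c ⊚ q))
              (vcomp (whiskr_assoc h c eta q) lam)) as [phi E].
  now exists phi.
Qed.

Lemma corresponding_lifting_cell {c : hom M A} (phi : cell (f ⊚ p) (c ⊚ q)) :
  exists eta : cell i (h ⊚ c), corresponding_cells phi eta.
Proof.
  destruct (proj2 (yon_commas_are_left_extensions Y C HC M L i p q lam HL (h ⊚ c))
              (cast2 (@cell K L (PP Y C)) eq_refl (comp1_assoc h c q)
                 (vcomp (whiskl h phi) (whiskr_assoc h f (chi Y f) p)))) as [eta Heta].
  exists eta. apply ceq_eq.
  eapply ceq_trans; [apply ceq_sym, (cast2_ceq eq_refl (comp1_assoc h c q))|].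
  rewrite <- Heta. apply vcomp_ceq; [apply ceq_refl|]. apply ceq_sym, whiskr_assoc_ceq.
Qed.

(* Transport along the bijections given by [chi^f] at [p r] and by the
   pointwise extension [lam] at the comma square of [q] and [x]. *)
Lemma corresponding_cells_universal_iff {c : hom M A} (phi : cell (f ⊚ p) (c ⊚ q))
  (eta : cell i (h ⊚ c)) :
  corresponding_cells phi eta ->
  forall (X P : ob K) (x : hom X M) (r : hom P L) (s : hom P X)
         (mu : cell (q ⊚ r) (x ⊚ s)),
  is_lax_pullback q x r s mu -> forall g : hom X A,
  bijective_map (fun ka : cell (c ⊚ x) g => vcomp (whiskl h ka) (whiskr_assoc h c eta x))
  <-> bijective_map (fun ka : cell (c ⊚ x) g => vcomp (whiskr s ka) (pointwise_cell phi mu)).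
Proof.
  intros E X P x r s mu Hmu g.
  pose proof (lax_pullback_pointwise_left_extension HK _ i p q lam
                (yon_commas_are_left_extensions Y C HC) HL X x P r s mu Hmu (h ⊚ g)) as Hlam.
  set (G := fun ga : cell ((f ⊚ p) ⊚ r) (g ⊚ s) =>
        cast2 (@cell K P (PP Y C)) (comp1_assoc (yon Y C) p r) (comp1_assoc h g s)
          (hvcomp (whiskl h ga) (whiskr_assoc h f (chi Y f) (p ⊚ r))
             (f_equal (comp1 h) (comp1_assoc f p r)))).
  assert (HG : bijective_map G).
  { eapply bijective_map_ceq; [| | | | | exact (yoneda_i K Y C A f HC Hf P (p ⊚ r) (g ⊚ s))];
      [apply comp1_assoc | reflexivity | apply comp1_assoc | apply comp1_assoc |].
    intros ga ga' Hga. apply ceq_sym.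
    eapply ceq_trans; [apply cast2_ceq|].
    apply hvcomp_vcomp_ceq; [apply ceq_refl|]. apply whiskl_ceq; [reflexivity|].
    apply ceq_sym, Hga. }
  refine (bijective_map_square_iff _ _ G _ _ HG Hlam).
  intros ka. apply ceq_eq. eapply ceq_trans; [apply cast2_ceq|].
  eapply ceq_trans; [apply (pasting_extension_side phi eta), E|].
  apply ceq_sym, pasting_lifting_side.
  Unshelve. all: reassoc.
Qed.

Lemma colimit_pointwise_left_extension {c : hom M A} (eta : cell i (h ⊚ c)) :
  is_colimit Y i f c eta ->
  exists phi : cell (f ⊚ p) (c ⊚ q), is_pointwise_left_extension (f ⊚ p) q c phi.
Proof.
  intros [_ Habs]. destruct (corresponding_extension_cell eta) as [phi E].
  exists phi. intros X x P r s mu Hmu g.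
  apply (corresponding_cells_universal_iff phi eta E X P x r s mu Hmu g), Habs.
Qed.

Lemma pointwise_left_extension_colimit {k : hom M A} (phi : cell (f ⊚ p) (k ⊚ q)) :
  admissible Y k -> is_pointwise_left_extension (f ⊚ p) q k phi ->
  exists eta : cell i (h ⊚ k), is_colimit Y i f k eta.
Proof.
  intros Hk Hphi. destruct (corresponding_lifting_cell phi) as [eta E].
  exists eta. split; [exact Hk|]. intros X x g.
  destruct HK as [_ [_ Hcomma]]. destruct (Hcomma _ _ _ q x) as [P [r [s [mu Hmu]]]].
  apply (corresponding_cells_universal_iff phi eta E X P x r s mu Hmu g), Hphi, Hmu.
Qed.

End WeightedColimits.

Theorem corollary3p14 (K : cat2) (Y : good_yoneda_structure K)
  (HK : finitely_complete (K := K))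
  (C A M : ob K) (i : hom M (PP Y C)) (f : hom C A)
  (L : ob K) (p : hom L C) (q : hom L M) (lam : cell (yon Y C ⊚ p) (i ⊚ q)) :
  small Y C -> adm_ob Y M -> admissible Y f ->
  is_lax_pullback (yon Y C) i p q lam ->
  ((exists (c : hom M A) (eta : cell i (homf1 Y f ⊚ c)), is_colimit Y i f c eta)
   <->
   (exists (k : hom M A) (phi : cell (f ⊚ p) (k ⊚ q)),
      admissible Y k /\ is_pointwise_left_extension (f ⊚ p) q k phi))
  /\
  (forall (c : hom M A) (eta : cell i (homf1 Y f ⊚ c))
          (k : hom M A) (phi : cell (f ⊚ p) (k ⊚ q)),
     is_colimit Y i f c eta ->
     admissible Y k -> is_pointwise_left_extension (f ⊚ p) q k phi ->
     iso1 k c).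
Proof.
  intros [HC _] _ Hf HL.
  split; [split|].
  - intros [c [eta Hcol]].
    destruct (colimit_pointwise_left_extension Y HK i f p q lam HC Hf HL eta Hcol)
      as [phi Hphi].
    exists c, phi. split; [exact (proj1 Hcol) | exact Hphi].
  - intros [k [phi [Hk Hphi]]].
    destruct (pointwise_left_extension_colimit Y HK i f p q lam HC Hf HL phi Hk Hphi)
      as [eta Hcol].
    now exists k, eta.
  - intros c eta k phi [_ Hc] Hk Hphi.
    destruct (pointwise_left_extension_colimit Y HK i f p q lam HC Hf HL phi Hk Hphi)
      as [eta' [_ Hk']].
    apply (left_lifting_unique i k c (homf1 Y f) eta' eta);
      now apply abs_left_lifting_left_lifting.
Qed.
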